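(* Let $\mathcal{U}$ be a subspace of $\mathbb{R}^n$. The following are equivalent: (1) $\mathcal{U}$ is recoverable by MTFA; (2) $\mathcal{U}$ is realizable; (3) $\mathcal{U}^\perp$ has the ellipsoid fitting property.
   Context: Minimum trace factor analysis (MTFA) with input a symmetric $n\times n$ matrix $X$ is the semidefinite program: minimize $\operatorname{tr}(L)$ over pairs $(D,L)$ of $n\times n$ symmetric matrices subject to $X=D+L$, $L$ positive semidefinite, $D$ diagonal. A subspace $\mathcal{U}\subseteq\mathbb{R}^n$ is recoverable by MTFA if for every diagonal $D^\star$ and every positive semidefinite $L^\star$ with column space equal to $\mathcal{U}$, the pair $(D^\star,L^\star)$ is the unique optimal solution of MTFA with input $X=D^\star+L^\star$. A correlation matrix is a positive semidefinite matrix with all diagonal entries equal to $1$. A subspace $\mathcal{U}\subseteq\mathbb{R}^n$ is realizable if there is an $n\times n$ correlation matrix $Q$ whose nullspace contains $\mathcal{U}$. A centered ellipsoid in $\mathbb{R}^k$ is described by a symmetric positive semidefinite $k\times k$ matrix $M$, and it passes through $v\in\mathbb{R}^k$ if $v^TMv=1$. A subspace $\mathcal{V}\subseteq\mathbb{R}^n$ has the ellipsoid fitting property if there is a $k\times n$ matrix $V$ (for some $k$) with row space $\mathcal{V}$ and a centered ellipsoid in $\mathbb{R}^k$ passing through every column of $V$. *)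

From mathcomp Require Import all_boot all_order all_algebra.
From mathcomp Require Import reals.
Set Implicit Arguments. Unset Strict Implicit. Unset Printing Implicit Defensive.
Import Order.TTheory GRing.Theory Num.Theory.
Local Open Scope ring_scope.

Section Defs.
Variable R : realType.

(* Subspaces of R^n are represented (as in mxalgebra) by the row space of a
   matrix U : 'M[R]_(m, n); vectors of R^n are rows/columns as convenient. *)

Definition symmetricmx (n : nat) (A : 'M[R]_n) : Prop := A^T = A.

Definition psdmx (n : nat) (A : 'M[R]_n) : Prop :=
  symmetricmx A /\ forall x : 'cV[R]_n, 0 <= (x^T *m A *m x) 0 0.

Definition mtfa_feasible (n : nat) (X D L : 'M[R]_n) : Prop :=
  symmetricmx D /\ symmetricmx L /\ X = D + L /\ psdmx L /\ is_diag_mx D.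

Definition mtfa_optimal (n : nat) (X D L : 'M[R]_n) : Prop :=
  mtfa_feasible X D L /\
  forall D' L' : 'M[R]_n, mtfa_feasible X D' L' -> \tr L <= \tr L'.

Definition mtfa_unique_optimal (n : nat) (X D L : 'M[R]_n) : Prop :=
  mtfa_optimal X D L /\
  forall D' L' : 'M[R]_n, mtfa_optimal X D' L' -> D' = D /\ L' = L.

(* column space of L equals the row space of U: colspace L = rowspace L^T *)
Definition recoverable (m n : nat) (U : 'M[R]_(m, n)) : Prop :=
  forall Dstar Lstar : 'M[R]_n,
    is_diag_mx Dstar -> psdmx Lstar -> (Lstar^T == U)%MS ->
    mtfa_unique_optimal (Dstar + Lstar) Dstar Lstar.

Definition correlationmx (n : nat) (Q : 'M[R]_n) : Prop :=
  psdmx Q /\ forall i, Q i i = 1.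

(* nullspace of Q contains U: Q u = 0 for every u in U, i.e. Q *m U^T = 0 *)
Definition realizable (m n : nat) (U : 'M[R]_(m, n)) : Prop :=
  exists Q : 'M[R]_n, correlationmx Q /\ Q *m U^T = 0.

(* centered ellipsoid {v | v^T M v = 1}, M psd, passes through v *)
Definition ellipsoid_passes (k : nat) (M : 'M[R]_k) (v : 'cV[R]_k) : Prop :=
  (v^T *m M *m v) 0 0 = 1.

Definition ellipsoid_fitting (p n : nat) (V : 'M[R]_(p, n)) : Prop :=
  exists (k : nat) (W : 'M[R]_(k, n)) (M : 'M[R]_k),
    (W == V)%MS /\ psdmx M /\ forall j : 'I_n, ellipsoid_passes M (col j W).

Definition orth_compl (m n : nat) (U : 'M[R]_(m, n)) : 'M[R]_n := kermx U^T.

End Defs.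

From Pilot Require Import Defs.
From mathcomp Require Import all_boot all_order all_algebra.
From mathcomp Require Import reals.
From mathcomp Require Import ring lra.
From mathcomp Require Import boolp classical_sets topology normedtype derive.
Set Implicit Arguments. Unset Strict Implicit. Unset Printing Implicit Defensive.
Import Order.TTheory GRing.Theory Num.Theory.
Import numFieldNormedType.Exports.
Local Open Scope ring_scope.

(* A correlation matrix Q with Q U^T = 0 is a dual certificate for MTFA: if
   (D, L) is feasible for X = D* + L*, then L - L* = D* - D is diagonal, so
   tr L - tr L* = tr (Q L) >= 0, and equality forces Q L = 0, hence D = D*.
   Writing Q = W^T M W, where the rows of W span the orthogonal complement of U,
   turns "Q has unit diagonal" into "the columns of W lie on the ellipsoid M".
   Conversely, let P be the orthogonal projection onto U.  Recovery of (0, t P)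
   shows that every diagonal matrix diag d that is positive semidefinite on
   ker P has nonnegative trace: otherwise t P + diag (d + e) is a feasible point
   of smaller trace for a small e > 0 and a large t.  Minimising
   sum_i (Q_ii - 1)^2 over the compact convex set of positive semidefinite Q with
   Q P = 0 and tr Q = n, and testing the first-order condition against the
   rank-one matrices z z^T with P z = 0, yields such a d of trace
   - n sum_i (Q_ii - 1)^2; so the minimum is 0. *)

Lemma quad_ge0_lin_ge0 (R : realType) (a b : R) : 0 <= b ->
  (forall s, 0 < s -> s <= 1 -> 0 <= s *+ 2 * a + s ^+ 2 * b) -> 0 <= a.
Proof.
move=> b0 quad; rewrite leNgt; apply/negP => a0.
pose s := - a / (b - a).
have s0 : 0 < s by rewrite divr_gt0 //; lra.
have s1 : s <= 1 by rewrite ler_pdivrMr //; lra.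
have sba : s * (b - a) = - a by rewrite divfK // gt_eqF //; lra.
have sb : s * b = - a + s * a by rewrite -sba; ring.
have := quad s s0 s1.
have -> : s ^+ 2 * b = s * (- a + s * a) by rewrite -sb; ring.
have : s * a < 0 by rewrite pmulr_rlt0.
rewrite mulr2n; nra.
Qed.

Lemma quad2_ge0 (R : realType) (t d e y z : R) : 0 < e -> d ^+ 2 / e - d <= t ->
  0 <= (t + d + e) * y ^+ 2 + 2 * d * y * z + e * z ^+ 2.
Proof.
move=> e0 ht; rewrite -(pmulr_rge0 _ e0).
have e_t : d ^+ 2 <= e * (t + d + e).
  have := ler_wpM2l (ltW e0) ht; rewrite mulrBr mulrCA divff ?mulr1 ?gt_eqF //.
  by move=> h; nra.
have := sqr_ge0 (d * y + e * z); have := ler_wpM2r (sqr_ge0 y) e_t; nra.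
Qed.

Lemma exists_pos_ub (R : realType) n (f : 'I_n -> R) :
  exists2 t, 0 < t & forall i, f i <= t.
Proof.
exists (1 + \sum_i `|f i|) => [|i]; first by rewrite ltr_wpDr // sumr_ge0.
rewrite (bigD1 i) //= addrCA ler_wpDr ?ler_norm //.
by rewrite addr_ge0 // sumr_ge0.
Qed.

Section QuadraticForms.
Variable R : realType.
Implicit Types (n : nat).

Definition qform n (A : 'M[R]_n) (x : 'cV[R]_n) : R := (x^T *m A *m x) 0 0.

Lemma qformE n (A : 'M[R]_n) x :
  qform A x = \sum_i \sum_j x i 0 * A i j * x j 0.
Proof.
rewrite /qform mxE (eq_bigr (fun j => \sum_i x i 0 * A i j * x j 0)).
  by rewrite exchange_big.
by move=> j _; rewrite mxE big_distrl /=; apply: eq_bigr => i _; rewrite !mxE.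
Qed.

Lemma qformD n (A B : 'M[R]_n) x : qform (A + B) x = qform A x + qform B x.
Proof. by rewrite /qform mulmxDr mulmxDl mxE. Qed.

Lemma qformZ n (a : R) (A : 'M[R]_n) x : qform (a *: A) x = a * qform A x.
Proof. by rewrite /qform -scalemxAr -scalemxAl mxE. Qed.

Lemma qformB n (A B : 'M[R]_n) x : qform (A - B) x = qform A x - qform B x.
Proof. by rewrite -scaleN1r qformD qformZ mulN1r. Qed.

Lemma qform_conj n k (C : 'M[R]_(k, n)) (M : 'M[R]_k) x :
  qform (C^T *m M *m C) x = qform M (C *m x).
Proof. by rewrite /qform trmx_mul !mulmxA. Qed.

Lemma qform_gram n k (C : 'M[R]_(k, n)) x :
  qform (C^T *m C) x = \sum_i (C *m x) i 0 ^+ 2.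
Proof.
rewrite /qform mulmxA -(trmx_mul C x) -mulmxA mxE.
by apply: eq_bigr => i _; rewrite mxE expr2.
Qed.

Lemma qform_rank1 n (a x : 'cV[R]_n) : qform (a *m a^T) x = (a^T *m x) 0 0 ^+ 2.
Proof. by have := qform_gram a^T x; rewrite trmxK big_ord1. Qed.

Lemma qform_diag n (d : 'rV[R]_n) x :
  qform (diag_mx d) x = \sum_i d 0 i * x i 0 ^+ 2.
Proof.
rewrite /qform mul_mx_diag mxE; apply: eq_bigr => i _; rewrite !mxE; ring.
Qed.

Lemma delta_mul n p (j : 'I_n) (M : 'M[R]_(n, p)) :
  (delta_mx j 0)^T *m M = row j M.
Proof. by rewrite trmx_delta -rowE. Qed.

Lemma qform_delta n (A : 'M[R]_n) j : qform A (delta_mx j 0) = A j j.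
Proof. by rewrite /qform delta_mul -colE !mxE. Qed.

Lemma bilin_sym n (A : 'M[R]_n) (a b : 'cV[R]_n) : A^T = A ->
  a^T *m A *m b = b^T *m A *m a.
Proof.
move=> sA; have -> : b^T *m A *m a = (a^T *m A *m b)^T.
  by rewrite !trmx_mul trmxK sA mulmxA.
by apply/matrixP => i j; rewrite !ord1 [RHS]mxE.
Qed.

Lemma qform_addZ n (A : 'M[R]_n) (a b : 'cV[R]_n) (s : R) : A^T = A ->
  qform A (a + s *: b) = qform A a + s *+ 2 * (b^T *m A *m a) 0 0 + s ^+ 2 * qform A b.
Proof.
move=> sA; rewrite /qform !linearD /= !linearZ /= !(mulmxDl, mulmxDr).
rewrite -!scalemxAl (bilin_sym a b sA).
move: (a^T *m A *m a) (b^T *m A *m a) (b^T *m A *m b) => X Y Z.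
by rewrite !mxE; ring.
Qed.

End QuadraticForms.

Section Psd.
Variable R : realType.
Implicit Types n : nat.

Lemma psdmx_sym n (A : 'M[R]_n) : psdmx A -> A^T = A.
Proof. by case. Qed.

Lemma psdmx_ge0 n (A : 'M[R]_n) x : psdmx A -> 0 <= qform A x.
Proof. by case=> _ /(_ x). Qed.

Lemma psdmx_diag_ge0 n (A : 'M[R]_n) j : psdmx A -> 0 <= A j j.
Proof. by move=> pA; rewrite -qform_delta; apply: psdmx_ge0. Qed.

Lemma psdmx0 n : psdmx (0 : 'M[R]_n).
Proof.
split=> [|x]; first by rewrite /Defs.symmetricmx trmx0.
by rewrite mulmx0 mul0mx mxE.
Qed.

Lemma psdmxD n (A B : 'M[R]_n) : psdmx A -> psdmx B -> psdmx (A + B).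
Proof.
move=> pA pB; split=> [|x].
  by rewrite /Defs.symmetricmx linearD /= (psdmx_sym pA) (psdmx_sym pB).
by rewrite -/(qform _ x) qformD addr_ge0 ?psdmx_ge0.
Qed.

Lemma psdmxZ n (a : R) (A : 'M[R]_n) : 0 <= a -> psdmx A -> psdmx (a *: A).
Proof.
move=> a0 pA; split=> [|x]; first by rewrite /Defs.symmetricmx linearZ /= psdmx_sym.
by rewrite -/(qform _ x) qformZ mulr_ge0 ?psdmx_ge0.
Qed.

Lemma psdmx_conj n k (C : 'M[R]_(k, n)) (M : 'M[R]_k) :
  psdmx M -> psdmx (C^T *m M *m C).
Proof.
move=> pM; split=> [|x]; last by rewrite -/(qform _ x) qform_conj psdmx_ge0.
by rewrite /Defs.symmetricmx !trmx_mul trmxK (psdmx_sym pM) mulmxA.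
Qed.

Lemma psdmx_gram n k (C : 'M[R]_(k, n)) : psdmx (C^T *m C).
Proof.
split=> [|x]; first by rewrite /Defs.symmetricmx trmx_mul trmxK.
by rewrite -/(qform _ x) qform_gram sumr_ge0 // => i _; rewrite sqr_ge0.
Qed.

Lemma psdmx_rank1 n (a : 'cV[R]_n) : psdmx (a *m a^T).
Proof. by have := psdmx_gram a^T; rewrite trmxK. Qed.

Lemma psdmx_qform_eq0 n (A : 'M[R]_n) c : psdmx A -> qform A c = 0 -> A *m c = 0.
Proof.
move=> pA Ac0; apply/matrixP => j k; rewrite ord1 [RHS]mxE.
set b := (A *m c) j 0.
have quad s : 0 <= s *+ 2 * b + s ^+ 2 * A j j.
  have := psdmx_ge0 (c + s *: delta_mx j 0) pA.
  by rewrite qform_addZ ?psdmx_sym // Ac0 add0r qform_delta delta_mul -row_mul mxE.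
have Ajj := psdmx_diag_ge0 j pA.
have b_ge0 : 0 <= b by apply: quad_ge0_lin_ge0 Ajj _ => s _ _; apply: quad.
have Nb_ge0 : 0 <= - b.
  apply: quad_ge0_lin_ge0 Ajj _ => s _ _.
  by have := quad (- s); rewrite sqrrN mulNrn mulNr mulrN.
lra.
Qed.

Lemma psdmx_schur n (A : 'M[R]_n) i : psdmx A -> 0 < A i i ->
  psdmx (A - (A i i)^-1 *: (col i A *m (col i A)^T)).
Proof.
move=> pA Aii; have sA := psdmx_sym pA.
split=> [|x].
  by rewrite /Defs.symmetricmx linearB /= linearZ /= trmx_mul trmxK sA.
rewrite -/(qform _ x) qformB qformZ qform_rank1 tr_col sA -row_mul mxE.
set b := (A *m x) i 0.
have := psdmx_ge0 (x + (- b / A i i) *: delta_mx i 0) pA.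
rewrite qform_addZ // qform_delta delta_mul -row_mul mxE -/b.
congr (_ <= _); field; exact: lt0r_neq0.
Qed.

Lemma schur_diag n (A : 'M[R]_n) i j :
  (A - (A i i)^-1 *: (col i A *m (col i A)^T)) j j = A j j - (A i i)^-1 * A j i ^+ 2.
Proof. by rewrite !mxE big_ord1 !mxE expr2. Qed.

Lemma psdmx_sum_rank1 n (A : 'M[R]_n) : psdmx A ->
  exists s : seq 'cV[R]_n, A = \sum_(c <- s) c *m c^T.
Proof.
have [k] := ubnP #|[set i | A i i != 0]|.
elim: k A => // k IH A; rewrite ltnS => hk pA.
have [i /= Aii_neq0 | diag0] := pickP (fun i => A i i != 0); last first.
  exists [::]; rewrite big_nil; apply/matrixP => p q.
  have /psdmx_qform_eq0 : qform A (delta_mx q 0) = 0.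
    by rewrite qform_delta; apply/eqP/negbFE/diag0.
  by rewrite -colE => /(_ pA) /matrixP /(_ p 0); rewrite !mxE.
have Aii : 0 < A i i by rewrite lt_def Aii_neq0 psdmx_diag_ge0.
set A' := A - (A i i)^-1 *: (col i A *m (col i A)^T).
have fewer : (#|[set j | A' j j != 0%R]| < #|[set j | A j j != 0%R]|)%N.
  rewrite (cardsD1 i [set j | A j j != 0]) inE Aii_neq0 add1n ltnS.
  apply/subset_leq_card/fintype.subsetP => j; rewrite !inE /A' !schur_diag => A'jj.
  have A'jj_ge0 := psdmx_diag_ge0 j (psdmx_schur pA Aii).
  rewrite schur_diag in A'jj_ge0.
  have sq_ge0 : 0 <= (A i i)^-1 * A j i ^+ 2.
    by rewrite mulr_ge0 ?invr_ge0 ?sqr_ge0 ?ltW.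
  apply/andP; split.
    by apply: contraNneq A'jj => ->; rewrite expr2 mulKf ?subrr // lt0r_neq0.
  by apply: contraNneq A'jj => Ajj0; rewrite Ajj0 in A'jj_ge0 *; apply/eqP; lra.
have [s A'E] := IH A' (leq_trans fewer hk) (psdmx_schur pA Aii).
exists ((Num.sqrt (A i i))^-1 *: col i A :: s); rewrite big_cons -A'E /A'.
rewrite linearZ /= -scalemxAl -scalemxAr scalerA -invfM -expr2 sqr_sqrtr ?ltW //.
by rewrite addrC subrK.
Qed.

Lemma mxtrace_mul_sum_rank1 n (Q : 'M[R]_n) (s : seq 'cV[R]_n) :
  \tr (Q *m \sum_(c <- s) c *m c^T) = \sum_(c <- s) qform Q c.
Proof.
rewrite mulmx_sumr raddf_sum /=; apply: eq_bigr => c _.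
by rewrite mulmxA mxtrace_mulC trace_mx11 /qform mulmxA.
Qed.

Lemma mxtrace_psdmx_mul_ge0 n (Q L : 'M[R]_n) :
  psdmx Q -> psdmx L -> 0 <= \tr (Q *m L).
Proof.
move=> pQ /psdmx_sum_rank1 [s ->]; rewrite mxtrace_mul_sum_rank1.
by apply: sumr_ge0 => c _; apply: psdmx_ge0.
Qed.

Lemma mxtrace_psdmx_mul_eq0 n (Q L : 'M[R]_n) :
  psdmx Q -> psdmx L -> \tr (Q *m L) = 0 -> Q *m L = 0.
Proof.
move=> pQ /psdmx_sum_rank1 [s ->]; rewrite mxtrace_mul_sum_rank1 => /eqP.
rewrite psumr_eq0 => [/allP Qs0|c _]; last exact: psdmx_ge0.
rewrite mulmx_sumr big_seq big1 // => c cs.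
by rewrite mulmxA psdmx_qform_eq0 ?mul0mx //; apply/eqP/Qs0.
Qed.

End Psd.

Section Certificate.
Variable R : realType.
Implicit Types n : nat.

Lemma is_diag_mxB n (A B : 'M[R]_n) :
  is_diag_mx A -> is_diag_mx B -> is_diag_mx (A - B).
Proof.
move=> /is_diag_mxP dA /is_diag_mxP dB; apply/is_diag_mxP => i j ij.
by rewrite !mxE dA // dB // subr0.
Qed.

Lemma mulmx_diag_entry n (Q D : 'M[R]_n) i :
  is_diag_mx D -> (Q *m D) i i = Q i i * D i i.
Proof.
move=> /is_diag_mxP dD; rewrite mxE (bigD1 i) //= big1 ?addr0 // => k ki.
by rewrite dD ?mulr0.
Qed.

Lemma correlation_certificate n (Q L0 L : 'M[R]_n) :
  correlationmx Q -> Q *m L0 = 0 -> psdmx L -> is_diag_mx (L - L0) ->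
  \tr L0 <= \tr L /\ (\tr L <= \tr L0 -> L = L0).
Proof.
move=> [pQ Qii] QL0 pL dD.
have QD : Q *m (L - L0) = Q *m L by rewrite mulmxBr QL0 subr0.
have trD : \tr L - \tr L0 = \tr (Q *m L).
  rewrite -linearB /= -QD; apply: eq_bigr => i _.
  by rewrite mulmx_diag_entry // Qii mul1r.
have tr_ge0 := mxtrace_psdmx_mul_ge0 pQ pL.
split=> [|le_tr]; first by rewrite -subr_ge0 trD.
have /(mxtrace_psdmx_mul_eq0 pQ pL) QL : \tr (Q *m L) = 0.
  by apply/eqP; rewrite eq_le tr_ge0 andbT -trD subr_le0.
apply/eqP; rewrite -subr_eq0; apply/eqP/matrixP => i j.
have [<-|ij] := eqVneq i j; last by rewrite ((is_diag_mxP dD) i j ij) mxE.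
by have := mulmx_diag_entry Q i dD; rewrite QD QL Qii mul1r !mxE.
Qed.

Lemma realizable_recoverable m n (U : 'M[R]_(m, n)) :
  realizable U -> recoverable U.
Proof.
move=> [Q [cQ QU]] Ds Ls dDs pLs /andP [/submxP [Y LsE] _].
have QLs : Q *m Ls = 0 by rewrite -(trmxK Ls) LsE trmx_mul mulmxA QU mul0mx.
have optimal D L : mtfa_feasible (Ds + Ls) D L ->
    \tr Ls <= \tr L /\ (\tr L <= \tr Ls -> L = Ls).
  case=> _ [_ [XE [pL dD]]]; apply: correlation_certificate cQ QLs pL _.
  have -> : L - Ls = Ds - D by apply/eqP; rewrite subr_eq addrAC XE [D + L]addrC addrK.
  exact: is_diag_mxB.
have feas : mtfa_feasible (Ds + Ls) Ds Ls.
  split; last by split; [exact: psdmx_sym | split].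
  by case/diag_mxP: dDs => d ->; rewrite /Defs.symmetricmx tr_diag_mx.
split=> [|D L [feasDL optDL]]; first by split=> // D L /optimal [].
have LE := (optimal D L feasDL).2 (optDL _ _ feas).
by split=> //; case: feasDL => _ [_ [XE _]]; apply: (addIr L); rewrite -XE LE.
Qed.

Lemma qform_col n k (W : 'M[R]_(k, n)) (M : 'M[R]_k) j :
  ((col j W)^T *m M *m col j W) 0 0 = (W^T *m M *m W) j j.
Proof. by rewrite -/(qform M _) colE -qform_conj qform_delta. Qed.

Lemma realizable_ellipsoid_fitting m n (U : 'M[R]_(m, n)) :
  realizable U -> ellipsoid_fitting (orth_compl U).
Proof.
move=> [Q [[pQ Qii] QU]]; set W := orth_compl U.
have QZW : Q *m pinvmx W *m W = Q by apply/mulmxKpV/sub_kermxP.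
move: (pinvmx W) QZW => Z QZW; clearbody W.
exists n, W, (Z^T *m Q *m Z); split; first by rewrite submx_refl.
split=> [|j]; first exact: psdmx_conj.
have WZQ : W^T *m Z^T *m Q = Q.
  by have := congr1 trmx QZW; rewrite !trmx_mul (psdmx_sym pQ) mulmxA.
by rewrite /ellipsoid_passes qform_col !mulmxA WZQ QZW Qii.
Qed.

Lemma ellipsoid_fitting_realizable m n (U : 'M[R]_(m, n)) :
  ellipsoid_fitting (orth_compl U) -> realizable U.
Proof.
move=> [k [W [M [/andP [/sub_kermxP WU _] [pM Wpass]]]]].
exists (W^T *m M *m W); split; last by rewrite -mulmxA WU mulmx0.
by split=> [|i]; [exact: psdmx_conj | rewrite -qform_col Wpass].
Qed.

End Certificate.

Section Projection.
Variable R : realType.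
Implicit Types n : nat.

Lemma rowv_mul_tr_eq0 n (v : 'rV[R]_n) : v *m v^T = 0 -> v = 0.
Proof.
move=> /matrixP /(_ 0 0); rewrite !mxE => vv0; apply/rowP => j; rewrite mxE.
apply/eqP; rewrite -sqrf_eq0; apply/eqP.
apply: (@psumr_eq0P _ _ predT (fun k => v 0 k ^+ 2)) => // [k _|].
  exact: sqr_ge0.
by rewrite -[RHS]vv0; apply: eq_bigr => k _; rewrite mxE expr2.
Qed.

Lemma row_free_gram_unitmx m n (B : 'M[R]_(m, n)) :
  row_free B -> B *m B^T \in unitmx.
Proof.
move=> freeB; rewrite -row_free_unit -kermx_eq0; apply/eqP/row_matrixP => i.
set x := row i _; have xG : x *m (B *m B^T) = 0 by rewrite -row_mul mulmx_ker row0.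
rewrite row0; apply/eqP; rewrite -(mulmx_free_eq0 _ freeB); apply/eqP.
by apply: rowv_mul_tr_eq0; rewrite trmx_mul mulmxA -(mulmxA x) xG mul0mx.
Qed.

Lemma orthogonal_projection_exists m n (U : 'M[R]_(m, n)) :
  exists P : 'M[R]_n, [/\ P^T = P, P *m P = P & (P == U)%MS].
Proof.
have BU : (row_base U :=: U)%MS := eq_row_base U.
have Gunit := row_free_gram_unitmx (row_base_free U).
move: (row_base U) BU Gunit => B BU Gunit.
have BPB : B *m (B^T *m invmx (B *m B^T) *m B) = B.
  by rewrite !mulmxA mulmxV // mul1mx.
exists (B^T *m invmx (B *m B^T) *m B); split.
- by rewrite !trmx_mul trmxK trmx_inv trmx_mul trmxK mulmxA.
- by move: (B^T *m _) BPB => X BPB; rewrite -mulmxA BPB.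
- apply/andP; split; rewrite -BU; first exact: submxMl.
  by rewrite -{1}BPB submxMl.
Qed.

Lemma psdmx_proj n (P : 'M[R]_n) : P^T = P -> P *m P = P -> psdmx P.
Proof. by move=> sP PP; have := psdmx_gram P; rewrite sP PP. Qed.

End Projection.

Section RecoverableDual.
Variable R : realType.
Implicit Types n : nat.

Definition diag_psd_on_ker n (P : 'M[R]_n) (d : 'rV[R]_n) : Prop :=
  forall z : 'cV[R]_n, P *m z = 0 -> 0 <= \sum_i d 0 i * z i 0 ^+ 2.

Lemma psdmx_proj_add_diag n (P : 'M[R]_n) (d : 'rV[R]_n) (e t : R) :
  P^T = P -> P *m P = P -> diag_psd_on_ker P d -> 0 < e ->
  (forall i, d 0 i ^+ 2 / e - d 0 i <= t) ->
  psdmx (t *: P + diag_mx (d + const_mx e)).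
Proof.
move=> sP PP dker e0 t_ge; split=> [|x].
  by rewrite /Defs.symmetricmx linearD /= linearZ /= sP tr_diag_mx.
rewrite -/(qform _ x) qformD qformZ qform_diag.
set y := P *m x; set z := x - y.
have Pz : P *m z = 0 by rewrite mulmxBr mulmxA PP subrr.
have yz : \sum_i y i 0 * z i 0 = 0.
  have : y^T *m z = 0 by rewrite trmx_mul sP -mulmxA Pz mulmx0.
  move=> /matrixP /(_ 0 0); rewrite !mxE => yz0; rewrite -[RHS]yz0.
  by apply: eq_bigr => i _; rewrite [y^T _ _]mxE.
have -> : qform P x = \sum_i y i 0 ^+ 2.
  by rewrite /y -qform_gram sP PP.
have -> : t * \sum_i y i 0 ^+ 2 + \sum_i (d + const_mx e) 0 i * x i 0 ^+ 2 =
    \sum_i ((t + d 0 i + e) * y i 0 ^+ 2 + 2 * d 0 i * y i 0 * z i 0 + e * z i 0 ^+ 2)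
    + \sum_i d 0 i * z i 0 ^+ 2 + 2 * e * \sum_i y i 0 * z i 0.
  rewrite !mulr_sumr -!big_split /=; apply: eq_bigr => i _.
  by rewrite (_ : x = y + z) ?subrKC // !mxE; ring.
rewrite yz mulr0 addr0 addr_ge0 ?dker // sumr_ge0 // => i _.
exact: quad2_ge0.
Qed.

Lemma recoverable_diag_trace_ge0 m n (U : 'M[R]_(m, n)) (P : 'M[R]_n) (d : 'rV[R]_n) :
  P^T = P -> P *m P = P -> (P == U)%MS -> recoverable U ->
  diag_psd_on_ker P d -> 0 <= \sum_i d 0 i.
Proof.
move=> sP PP PU rec dker; rewrite leNgt; apply/negP => S_lt0.
(* t P + diag (d + e) is then feasible for X = t P, with a smaller trace. *)
set S := \sum_i d 0 i in S_lt0.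
have n1_gt0 : 0 < n%:R + 1 :> R by rewrite ltr_wpDl ?ler0n.
pose e := - S / (n%:R + 1); have e0 : 0 < e by rewrite divr_gt0 // oppr_gt0.
have [t t_gt0 t_ge] := exists_pos_ub (fun i => d 0 i ^+ 2 / e - d 0 i).
have ptP : psdmx (t *: P) by apply: psdmxZ (ltW t_gt0) (psdmx_proj sP PP).
have tPU : ((t *: P)^T == U)%MS.
  rewrite linearZ /= sP; apply/eqmxP.
  by apply: eqmx_trans (eqmx_scale _ (lt0r_neq0 t_gt0)) _; apply/eqmxP.
have [[_ tP_opt] _] := rec 0 (t *: P) (mx0_is_diag _ _ _) ptP tPU.
set ev := d + const_mx e.
have feas : mtfa_feasible (0 + t *: P) (- diag_mx ev) (t *: P + diag_mx ev).
  have pL := psdmx_proj_add_diag sP PP dker e0 t_ge.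
  split; first by rewrite /Defs.symmetricmx raddfN /= tr_diag_mx.
  split; first exact: psdmx_sym pL.
  split; first by rewrite add0r addrCA addNr addr0.
  by split=> //; rewrite -raddfN diag_mx_is_diag.
have := tP_opt _ _ feas; rewrite mxtraceD lerDl mxtrace_diag.
have -> : \sum_j ev 0 j = S / (n%:R + 1).
  under eq_bigr do rewrite !mxE.
  rewrite big_split /= sumr_const card_ord -mulr_natr -/S /e.
  by field; rewrite lt0r_neq0.
by rewrite pmulr_lge0 ?invr_gt0 // leNgt S_lt0.
Qed.

End RecoverableDual.

Local Open Scope classical_set_scope.

Section RealFunctionContinuity.
Context {T : topologicalType} {R : realType}.
Implicit Types f g : T -> R.

Lemma continuous_sub f g :
  continuous f -> continuous g -> continuous (fun x => f x - g x).
Proof. by move=> fc gc x; apply: cvgB; [exact: fc | exact: gc]. Qed.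

Lemma continuous_mul f g :
  continuous f -> continuous g -> continuous (fun x => f x * g x).
Proof. by move=> fc gc x; apply: cvgM; [exact: fc | exact: gc]. Qed.

Lemma continuous_sum (I : Type) (r : seq I) (F : I -> T -> R) :
  (forall i, continuous (F i)) -> continuous (fun x => \sum_(i <- r) F i x).
Proof.
move=> Fc; elim: r => [|a r IHr].
  by under eq_fun do rewrite big_nil; exact: cst_continuous.
under eq_fun do rewrite big_cons.
by move=> x; apply: cvgD; [exact: Fc | exact: IHr].
Qed.

End RealFunctionContinuity.

Lemma closed_forall {T U : topologicalType} (I : Type) (F : I -> T -> U) (A : set U) :
  closed A -> (forall i, continuous (F i)) -> closed [set x | forall i, A (F i x)].
Proof.
move=> Acl Fcont.
have -> : [set x | forall i, A (F i x)] = \bigcap_(i in [set: I]) (F i @^-1` A).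
  by apply/seteqP; split=> x /= Ax i; [move=> _|]; apply: Ax.
by apply: closed_bigI => i _; apply: preimage_closed => // x _; apply: Fcont.
Qed.

Section CorrelationCandidates.
Variables (R : realType) (n : nat) (P : 'M[R]_n).
Hypothesis sP : P^T = P.

(* Relaxing [Q i i = 1] to [\tr Q = n] makes the feasible set compact. *)
Definition corr_candidate (Q : 'M[R]_n) : Prop :=
  psdmx Q /\ Q *m P = 0 /\ \tr Q = n%:R.

Lemma corr_candidate_convex Q0 Q s : 0 <= s <= 1 ->
  corr_candidate Q0 -> corr_candidate Q -> corr_candidate (Q0 + s *: (Q - Q0)).
Proof.
move=> /andP [s0 s1] [pQ0 [Q0P trQ0]] [pQ [QP trQ]].
have -> : Q0 + s *: (Q - Q0) = (1 - s) *: Q0 + s *: Q.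
  by rewrite scalerBr scalerBl scale1r addrA addrC addrA [- _ + _]addrC.
split; first by apply: psdmxD; apply: psdmxZ => //; rewrite subr_ge0.
split; first by rewrite mulmxDl -!scalemxAl Q0P QP !scaler0 addr0.
by rewrite mxtraceD !mxtraceZ trQ0 trQ; ring.
Qed.

Lemma corr_candidate_rank1 (z : 'cV[R]_n) : P *m z = 0 -> \sum_i z i 0 ^+ 2 != 0 ->
  corr_candidate ((n%:R / \sum_i z i 0 ^+ 2) *: (z *m z^T)).
Proof.
move=> Pz S_neq0.
have S_gt0 : 0 < \sum_i z i 0 ^+ 2.
  by rewrite lt_def S_neq0 sumr_ge0 // => i _; rewrite sqr_ge0.
split; first by apply: psdmxZ (psdmx_rank1 z); rewrite divr_ge0 ?ler0n ?ltW.
split; first by rewrite -scalemxAl -mulmxA -sP -trmx_mul Pz trmx0 mulmx0 scaler0.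
rewrite mxtraceZ mxtrace_mulC trace_mx11 mxE.
have -> : \sum_j z^T 0 j * z j 0 = \sum_i z i 0 ^+ 2.
  by apply: eq_bigr => i _; rewrite mxE expr2.
by rewrite divfK.
Qed.

Lemma corr_candidate_entry_bound Q i j : corr_candidate Q -> `|Q i j| <= n%:R.
Proof.
move=> [pQ [_ trQ]].
have diag_ge0 k : 0 <= Q k k by apply: psdmx_diag_ge0.
have diag_le k : Q k k <= n%:R.
  by rewrite -trQ /mxtrace (bigD1 k) //= lerDl sumr_ge0.
have pair_ge0 s : s ^+ 2 = 1 -> 0 <= Q j j + s *+ 2 * Q i j + Q i i.
  move=> s2; have := psdmx_ge0 (delta_mx j 0 + s *: delta_mx i 0) pQ.
  by rewrite qform_addZ ?psdmx_sym // !qform_delta s2 mul1r delta_mul -colE !mxE.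
have := pair_ge0 1 (expr1n _ _); have := pair_ge0 (-1) ltac:(by rewrite sqrrN expr1n).
have := diag_le i; have := diag_le j; have := diag_ge0 i; have := diag_ge0 j.
rewrite ler_norml !mulr2n; lra.
Qed.

Lemma vec_mx_coord_continuous i j :
  continuous (fun v : 'rV[R]_(n * n) => vec_mx v i j).
Proof. by under eq_fun do rewrite mxE; exact: coord_continuous. Qed.

Lemma corr_candidate_setE :
  [set v : 'rV[R]_(n * n) | corr_candidate (vec_mx v)] =
  [set v | forall ij : 'I_n * 'I_n, vec_mx v ij.2 ij.1 - vec_mx v ij.1 ij.2 = 0] `&`
  [set v | forall x, 0 <= qform (vec_mx v) x] `&`
  [set v | forall ij : 'I_n * 'I_n, (vec_mx v *m P) ij.1 ij.2 = 0] `&`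
  [set v | \tr (vec_mx v) = n%:R].
Proof.
apply/seteqP; split=> v /=.
  move=> [[sQ pQ] [QP trQ]]; do ![split] => // [[i j]|[i j]] /=.
    by rewrite -[in vec_mx v j i]sQ mxE subrr.
  by rewrite QP mxE.
move=> [[[sQ pQ] QP] trQ]; do ![split] => //; apply/matrixP => i j.
  by rewrite mxE; apply/eqP; rewrite -subr_eq0; apply/eqP/(sQ (i, j)).
by rewrite (QP (i, j)) mxE.
Qed.

Lemma closed_corr_candidate :
  closed [set v : 'rV[R]_(n * n) | corr_candidate (vec_mx v)].
Proof.
have coord := vec_mx_coord_continuous; have cst (c : R) := @cst_continuous _ _ c.
rewrite corr_candidate_setE; apply: closedI; [apply: closedI; [apply: closedI|]|].
- apply: (closed_forall (A := [set r : R | r = 0])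
    (F := fun ij v => vec_mx v ij.2 ij.1 - vec_mx v ij.1 ij.2)) => [|[i j]].
    exact: closed_eq.
  exact: continuous_sub.
- apply: (closed_forall (A := [set r : R | 0 <= r])
    (F := fun x v => qform (vec_mx v) x)) => [|x]; first exact: closed_ge.
  under eq_fun do rewrite qformE.
  apply: continuous_sum => i; apply: continuous_sum => j.
  by apply: continuous_mul => //; apply: continuous_mul.
- apply: (closed_forall (A := [set r : R | r = 0])
    (F := fun (ij : 'I_n * 'I_n) (v : 'rV[R]_(n * n)) => (vec_mx v *m P) ij.1 ij.2))
    => [|[i j]]; first exact: closed_eq.
  under eq_fun do rewrite mxE.
  by apply: continuous_sum => k; apply: continuous_mul.
- apply: (preimage_closed (f := fun v : 'rV[R]_(n * n) => \tr (vec_mx v))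
    (D := [set r | r = n%:R])); last exact: closed_eq.
  by move=> v _; move: v; apply: continuous_sum.
Qed.

Lemma compact_corr_candidate :
  compact [set v : 'rV[R]_(n * n) | corr_candidate (vec_mx v)].
Proof.
apply: bounded_closed_compact closed_corr_candidate.
apply: filterS (nbhs_pinfty_ge (num_real (n%:R : R))) => M nM v Cv.
apply: le_trans nM; rewrite [X in X <= _]/Num.norm /= mx_normrE.
apply: bigmax_le => [|[a k] _] /=; first exact: ler0n.
rewrite (ord1 a); case/mxvec_indexP: k => i j.
by have := corr_candidate_entry_bound i j Cv; rewrite mxE.
Qed.

Lemma corr_candidate_minimizer : (exists Q, corr_candidate Q) ->
  exists2 Q0, corr_candidate Q0 & forall Q, corr_candidate Q ->
    \sum_i (Q0 i i - 1) ^+ 2 <= \sum_i (Q i i - 1) ^+ 2.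
Proof.
move=> [Q CQ].
pose f (v : 'rV[R]_(n * n)) := \sum_i (vec_mx v i i - 1) ^+ 2.
pose C := [set v : 'rV[R]_(n * n) | corr_candidate (vec_mx v)].
have [v Cv vmin] : exists2 v, v \in C & forall t, t \in C -> f v <= f t.
  apply: EVT_min_rV compact_corr_candidate _.
    by exists (mxvec Q); rewrite /C /= mxvecK.
  apply: continuous_subspaceT; apply: continuous_sum => i.
  have coord_sub1 : continuous (fun v : 'rV[R]_(n * n) => vec_mx v i i - 1).
    by apply: continuous_sub; [exact: vec_mx_coord_continuous | exact: cst_continuous].
  under eq_fun do rewrite expr2.
  exact: (continuous_mul coord_sub1 coord_sub1).
move: Cv; rewrite inE => Cv; exists (vec_mx v) => // Q' CQ'.
by have := vmin (mxvec Q'); rewrite inE /C /f /= mxvecK; apply.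
Qed.

Lemma corr_candidate_min_first_order Q0 : corr_candidate Q0 ->
  (forall Q, corr_candidate Q -> \sum_i (Q0 i i - 1) ^+ 2 <= \sum_i (Q i i - 1) ^+ 2) ->
  forall Q, corr_candidate Q -> 0 <= \sum_i (Q0 i i - 1) * (Q i i - Q0 i i).
Proof.
move=> CQ0 Q0min Q CQ.
apply: (quad_ge0_lin_ge0 (b := \sum_i (Q i i - Q0 i i) ^+ 2)).
  by apply: sumr_ge0 => i _; apply: sqr_ge0.
move=> s s0 s1; have s01 : 0 <= s <= 1 by rewrite ltW.
have Cs := corr_candidate_convex s01 CQ0 CQ.
have -> : s *+ 2 * \sum_i (Q0 i i - 1) * (Q i i - Q0 i i)
    + s ^+ 2 * \sum_i (Q i i - Q0 i i) ^+ 2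
    = \sum_i (((Q0 + s *: (Q - Q0)) i i - 1) ^+ 2 - (Q0 i i - 1) ^+ 2).
  by rewrite !mulr_sumr -big_split /=; apply: eq_bigr => i _; rewrite !mxE; ring.
by rewrite sumrB subr_ge0; apply: Q0min.
Qed.

Lemma corr_candidate_min_dual Q0 : corr_candidate Q0 ->
  (forall Q, corr_candidate Q -> 0 <= \sum_i (Q0 i i - 1) * (Q i i - Q0 i i)) ->
  diag_psd_on_ker P (\row_i (n%:R * (Q0 i i - 1) - \sum_j Q0 j j * (Q0 j j - 1))).
Proof.
move=> CQ0 first z Pz.
set beta := \sum_j Q0 j j * (Q0 j j - 1); set S := \sum_i z i 0 ^+ 2.
have [S0|S_neq0] := eqVneq S 0.
  rewrite big1 // => i _.
  have -> : z i 0 ^+ 2 = 0.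
    by apply: (@psumr_eq0P _ _ predT (fun k => z k 0 ^+ 2)) => // k _; apply: sqr_ge0.
  by rewrite mulr0.
have S_gt0 : 0 < S by rewrite lt_def S_neq0 sumr_ge0 // => i _; apply: sqr_ge0.
have := first _ (corr_candidate_rank1 Pz S_neq0).
set X := \sum_i (Q0 i i - 1) * z i 0 ^+ 2.
have -> : \sum_i (Q0 i i - 1) * (((n%:R / S) *: (z *m z^T)) i i - Q0 i i) =
    n%:R / S * X - beta.
  rewrite /beta mulr_sumr -sumrB; apply: eq_bigr => i _.
  by rewrite !mxE big_ord1 !mxE; ring.
have -> : \sum_i (\row_i (n%:R * (Q0 i i - 1) - beta)) 0 i * z i 0 ^+ 2 =
    S * (n%:R / S * X - beta).
  rewrite mulrBr mulrA [S * _]mulrC divfK ?lt0r_neq0 // /X /S mulr_sumr mulr_suml.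
  by rewrite -sumrB; apply: eq_bigr => i _; rewrite mxE; ring.
by move=> h; apply: mulr_ge0 (ltW S_gt0) h.
Qed.

Lemma correlation_of_diag_trace_ge0 :
  (forall d, diag_psd_on_ker P d -> 0 <= \sum_i d 0 i) ->
  exists Q, correlationmx Q /\ Q *m P = 0.
Proof.
move=> dual.
have [[z [Pz S_neq0]]|ker0] :=
  pselect (exists z : 'cV[R]_n, P *m z = 0 /\ \sum_i z i 0 ^+ 2 != 0); last first.
  (* Here ker P = 0, so d = -1 is admissible, which forces n = 0. *)
  have : 0 <= \sum_i (const_mx (-1) : 'rV[R]_n) 0 i.
    apply: dual => z Pz; under eq_bigr do rewrite mxE mulN1r.
    rewrite sumrN oppr_ge0 le_eqVlt; apply/orP; left; apply/eqP.
    by apply/eqP/negPn/negP => S_neq0; apply: ker0; exists z.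
  under eq_bigr do rewrite mxE.
  rewrite sumr_const card_ord mulNrn oppr_ge0 lern0 => /eqP n0.
  exists 0; split; last exact: mul0mx.
  by split=> [|i]; [exact: psdmx0 | have := ltn_ord i; rewrite [X in (_ < X)%N]n0].
have [Q0 CQ0 Q0min] :=
  corr_candidate_minimizer (ex_intro _ _ (corr_candidate_rank1 Pz S_neq0)).
have := dual _ (corr_candidate_min_dual CQ0 (corr_candidate_min_first_order CQ0 Q0min)).
have -> : \sum_i (\row_i (n%:R * (Q0 i i - 1) - \sum_j Q0 j j * (Q0 j j - 1))) 0 i =
    n%:R * - \sum_i (Q0 i i - 1) ^+ 2.
  under eq_bigr do rewrite mxE.
  rewrite sumrB -mulr_sumr sumr_const card_ord -[(\sum_j _) *+ n]mulr_natl -mulrBr.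
  rewrite -sumrB -sumrN.
  by congr (_ * _); apply: eq_bigr => i _; ring.
move=> sq_le0; exists Q0; split; last by case: CQ0 => _ [].
split=> [|i]; first by case: CQ0.
have n_gt0 : 0 < n%:R :> R by rewrite ltr0n (leq_ltn_trans _ (ltn_ord i)).
move: sq_le0; rewrite pmulr_rge0 // oppr_ge0 => sq_le0.
apply/eqP; rewrite -subr_eq0 -sqrf_eq0; apply/eqP.
apply: (@psumr_eq0P _ _ predT (fun k => (Q0 k k - 1) ^+ 2)) => // [k _|].
  exact: sqr_ge0.
by apply/eqP; rewrite eq_le sq_le0 sumr_ge0 // => k _; apply: sqr_ge0.
Qed.

End CorrelationCandidates.

Lemma recoverable_realizable (R : realType) m n (U : 'M[R]_(m, n)) :
  recoverable U -> realizable U.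
Proof.
move=> rec; have [P [sP PP PU]] := orthogonal_projection_exists U.
have [Q [cQ QP]] := correlation_of_diag_trace_ge0 sP
  (fun d => recoverable_diag_trace_ge0 sP PP PU rec).
exists Q; split=> //; have /submxP [Y ->] : (U <= P)%MS by case/andP: PU.
by rewrite trmx_mul sP mulmxA QP mul0mx.
Qed.

Theorem proposition3p1 (R : realType) (m n : nat) (U : 'M[R]_(m, n)) :
  (recoverable U <-> realizable U) /\
  (realizable U <-> ellipsoid_fitting (orth_compl U)).
Proof.
split; split.
- exact: recoverable_realizable.
- exact: realizable_recoverable.
- exact: realizable_ellipsoid_fitting.
- exact: ellipsoid_fitting_realizable.
Qed.
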